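(* Let $d,k\in\mathbb{N}$ and $R=\mathbb{R}\langle s^{(1)},\dots,s^{(k-1)}\rangle$. The exponential $\exp:\mathfrak{g}_{d,k}\to\mathcal{G}_{d,k}$ and the logarithm $\log:\mathcal{G}_{d,k}\to\mathfrak{g}_{d,k}$ are each represented by an element of $s^{(k)}+R$, while the group inversion $\mathcal{G}_{d,k}\to\mathcal{G}_{d,k}$, $\mathbf{z}\mapsto\mathbf{z}^{-1}$, is represented by an element of $-s^{(k)}+R$.
   Context: $T_{d,k}=\bigoplus_{\ell=0}^k(\mathbb{R}^d)^{\otimes\ell}$ is the truncated tensor algebra (elements $\mathbf{z}=\mathbf{z}^{(0)}\oplus\dots\oplus\mathbf{z}^{(k)}$) with product the bilinear extension of the tensor product of levels, set to $0$ when the total level exceeds $k$. $\mathfrak{g}_{d,k}$ is the smallest Lie subalgebra (commutator bracket) of $T_{d,k}$ containing $e_1,\dots,e_d\in\mathbb{R}^d$; $\exp(\mathbf{z})=\sum_{\ell=0}^k\mathbf{z}^{\otimes\ell}/\ell!$; $\mathcal{G}_{d,k}=\exp(\mathfrak{g}_{d,k})$, a group; $\log(\mathbf{s})=\sum_{\ell\ge1}\frac{(-1)^{\ell+1}}{\ell}(\mathbf{s}-1)^{\otimes\ell}$. $\mathbb{R}\langle s^{(1)},\dots,s^{(k)}\rangle$ is the free associative $\mathbb{R}$-algebra on non-commuting variables $s^{(1)},\dots,s^{(k)}$ (constants included). For $f$ in it, $\mathrm{eval}_f:T_{d,k}\to T_{d,k}$ is obtained by substituting $\mathbf{z}^{(i)}$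 (viewed in $T_{d,k}$) for $s^{(i)}$ and computing in $T_{d,k}$, with constants mapped to multiples of the unit $1$. A map $\phi$ defined on a subset of $T_{d,k}$ is represented by $f$ if $\phi=\mathrm{eval}_f$ on that subset. *)

From HB Require Import structures.
From mathcomp Require Import all_boot all_order all_algebra.
Set Implicit Arguments. Unset Strict Implicit. Unset Printing Implicit Defensive.
Import Order.TTheory GRing.Theory Num.Theory.
Local Open Scope ring_scope.

Section TensorAlgebra.
Variables (R : realFieldType) (d k : nat).

(* An element of T_{d,k} is given by its coefficients on words (= basis
   tensors e_{w_1} (x) ... (x) e_{w_l}) over the alphabet 'I_d.  Genuine
   elements of T_{d,k} vanish on words of length > k; all operations below
   produce such functions. *)
Definition tens := seq 'I_d -> R.

Definition tzero : tens := fun _ => 0.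
Definition tone : tens := fun w => if w == [::] then 1 else 0.
Definition tadd (x y : tens) : tens := fun w => x w + y w.
Definition tscale (c : R) (x : tens) : tens := fun w => c * x w.
Definition topp (x : tens) : tens := tscale (-1) x.
Definition tsub (x y : tens) : tens := tadd x (topp y).

Definition tmul (x y : tens) : tens := fun w =>
  if (size w <= k)%N
  then \sum_(i < (size w).+1) x (take i w) * y (drop i w)
  else 0.

Definition tpow (x : tens) (n : nat) : tens := iter n (tmul x) tone.

Definition tsum (n : nat) (f : nat -> tens) : tens :=
  foldr tadd tzero (map f (iota 0 n)).

Definition tbasis (i : 'I_d) : tens := fun w => if w == [:: i] then 1 else 0.

Definition tlevel (l : nat) (z : tens) : tens :=
  fun w => if size w == l then z w else 0.

Definition tbracket (x y : tens) : tens := tsub (tmul x y) (tmul y x).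

Definition lie_closed (S : tens -> Prop) : Prop :=
  [/\ S tzero,
      forall x y, S x -> S y -> S (tadd x y),
      forall c x, S x -> S (tscale c x),
      forall x y, S x -> S y -> S (tbracket x y)
    & forall i, S (tbasis i)].

Definition in_lie (x : tens) : Prop :=
  forall S : tens -> Prop, lie_closed S -> S x.

Definition texp (z : tens) : tens :=
  tsum k.+1 (fun l => tscale (l`!%:R)^-1 (tpow z l)).

(* log(s) = sum_{l>=1} (-1)^{l+1}/l (s - 1)^{(x) l}; for s in G_{d,k} the
   terms with l > k vanish, so the sum is taken over 1 <= l <= k. *)
Definition tlog (s : tens) : tens :=
  tsum k (fun l => tscale ((-1) ^+ l.+2 / l.+1%:R) (tpow (tsub s tone) l.+1)).

Definition in_group (s : tens) : Prop := exists z, in_lie z /\ s = texp z.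

(* The free associative algebra R<s^{(1)}, ..., s^{(k)}>: an element is a
   finite R-linear combination of words in the non-commuting variables; a
   word is a seq nat, the letter i standing for s^{(i)} (the empty word is
   the constant 1). *)
Definition ncpoly := seq (R * seq nat).

Definition ncpoly_over (m : nat) (f : ncpoly) : bool :=
  all (fun t => all (fun i => (0 < i <= m)%N) t.2) f.

Definition ncvar (i : nat) : ncpoly := [:: (1, [:: i])].
Definition ncadd (f g : ncpoly) : ncpoly := f ++ g.
Definition ncopp (f : ncpoly) : ncpoly := [seq (- t.1, t.2) | t <- f].

Definition eval_word (w : seq nat) (z : tens) : tens :=
  foldr (fun i acc => tmul (tlevel i z) acc) tone w.

Definition ncpoly_eval (f : ncpoly) (z : tens) : tens :=
  foldr (fun t acc => tadd (tscale t.1 (eval_word t.2 z)) acc) tzero f.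

Definition represents (D : tens -> Prop) (phi : tens -> tens) (f : ncpoly) :=
  forall z, D z -> ncpoly_eval f z = phi z.

End TensorAlgebra.

From mathcomp Require Import all_boot all_order all_algebra ring.
From Stdlib Require Import FunctionalExtensionality.
Set Implicit Arguments. Unset Strict Implicit. Unset Printing Implicit Defensive.
Import Order.TTheory GRing.Theory Num.Theory.
Local Open Scope ring_scope.

(* All three maps are truncated power series  sum_l c_l y^(e_l)  in a tensor y
   without level-0 part: y = z for exp, y = z - 1 for log, and for the inverse
   the Neumann series  sum_(l <= k) (-1)^l (z - 1)^l, which inverts z because
   (z - 1)^(k+1) = 0.  Writing y = y^(1) + ... + y^(k) and expanding, each power
   becomes a sum of words in the levels y^(i) = z^(i) (i > 0).  A word of total
   level > k evaluates to 0, so the only surviving word containing the letter k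
   is the one-letter word s^(k), which arises from e_l = 1 alone.  The series is
   therefore represented by c s^(k) plus a polynomial in s^(1), ..., s^(k-1),
   with c = 1/1! = 1 for exp, c = 1 for log and c = -1 for the inverse. *)

Lemma big_pred1_seq (V : nmodType) (s : seq nat) j (F : nat -> V) :
  uniq s -> j \in s -> \sum_(i <- s | i == j) F i = F j.
Proof.
move=> us js; rewrite big_mkcond (bigD1_seq j) //= eqxx big1 ?addr0 //.
by move=> i /negbTE ->.
Qed.

Lemma exchange_big_nat_triangle (V : nmodType) n (F : nat -> nat -> V) :
  \sum_(0 <= i < n) \sum_(0 <= j < i.+1) F i j =
  \sum_(0 <= j < n) \sum_(j <= i < n) F i j.
Proof.
rewrite (@eq_big_nat _ _ _ 0 n _
  (fun i => \sum_(0 <= j < n) if (j < i.+1)%N then F i j else 0)); last first.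
  by move=> i /andP[_ lt_in]; rewrite (big_nat_widen _ _ _ _ _ lt_in) big_mkcond.
rewrite exchange_big_nat; apply: eq_bigr => j _.
rewrite (big_nat_widenl _ _ _ _ _ (leq0n j)) big_mkcond; apply: eq_bigr => i _.
by rewrite ltnS.
Qed.

Lemma leq_sumn_mem (u : seq nat) m : m \in u -> (m <= sumn u)%N.
Proof.
elim: u => [|a u IH] //=; rewrite inE => /orP[/eqP -> | /IH]; first exact: leq_addr.
by move/leq_trans; apply; apply: leq_addl.
Qed.

Lemma ltn_sumn_mem (u : seq nat) m : all (leq 1) u -> m \in u -> u != [:: m] ->
  (m < sumn u)%N.
Proof.
case: u => [|a u] //= /andP[a_gt0 u_gt0]; rewrite inE => /orP[/eqP <- | mu] u_neq.
  case: u u_gt0 u_neq => [|b u] /=; first by rewrite eqxx.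
  by case/andP=> b_gt0 _ _; rewrite -[X in (X < _)%N]addn0 ltn_add2l ltn_addr.
by rewrite -add1n leq_add // leq_sumn_mem.
Qed.

Section TruncatedProduct.
Variables (R : realFieldType) (d k : nat).
Notation T := (tens R d).
Implicit Types (x y z : T) (w v : seq 'I_d).

Lemma tsumE n (f : nat -> T) w : tsum n f w = \sum_(l <- iota 0 n) f l w.
Proof.
rewrite /tsum; elim: (iota 0 n) => [|a s IH] /=; first by rewrite big_nil.
by rewrite big_cons /tadd IH.
Qed.

Lemma ncpoly_evalE (f : ncpoly R) z w :
  ncpoly_eval k f z w = \sum_(t <- f) t.1 * eval_word k t.2 z w.
Proof.
elim: f => [|a f IH] /=; first by rewrite big_nil.
by rewrite big_cons /tadd /tscale IH.
Qed.

Lemma tmul_eq0 x y w : (k < size w)%N -> tmul k x y w = 0.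
Proof. by move=> lt_kw; rewrite /tmul leqNgt lt_kw. Qed.

Lemma tmul_ext x x' y y' :
    (forall v, (size v <= k)%N -> x v = x' v) ->
    (forall v, (size v <= k)%N -> y v = y' v) ->
  tmul k x y = tmul k x' y'.
Proof.
move=> eq_x eq_y; apply: functional_extensionality => w; rewrite /tmul.
case: ifP => // le_wk; apply: eq_bigr => i _.
rewrite eq_x ?eq_y // (leq_trans _ le_wk) //.
  by rewrite size_drop leq_subr.
by rewrite size_take_min geq_minr.
Qed.

Lemma tmul_suml (I : Type) (s : seq I) (F : I -> T) y w :
  tmul k (fun v => \sum_(i <- s) F i v) y w = \sum_(i <- s) tmul k (F i) y w.
Proof.
rewrite /tmul; case: ifP => _; last by rewrite big1.
under eq_bigr do rewrite mulr_suml.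
by rewrite exchange_big.
Qed.

Lemma tmul_sumr (I : Type) (s : seq I) (F : I -> T) x w :
  tmul k x (fun v => \sum_(i <- s) F i v) w = \sum_(i <- s) tmul k x (F i) w.
Proof.
rewrite /tmul; case: ifP => _; last by rewrite big1.
under eq_bigr do rewrite mulr_sumr.
by rewrite exchange_big.
Qed.

Lemma tmul_scalel c x y w : tmul k (fun v => c * x v) y w = c * tmul k x y w.
Proof.
rewrite /tmul; case: ifP => _; last by rewrite mulr0.
by rewrite mulr_sumr; apply: eq_bigr => i _; rewrite mulrA.
Qed.

Lemma tmul_scaler c x y w : tmul k x (fun v => c * y v) w = c * tmul k x y w.
Proof.
rewrite /tmul; case: ifP => _; last by rewrite mulr0.
by rewrite mulr_sumr; apply: eq_bigr => i _; rewrite mulrCA.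
Qed.

Lemma tmul_addl x x' y w : tmul k (tadd x x') y w = tmul k x y w + tmul k x' y w.
Proof.
rewrite /tmul /tadd; case: ifP => _; last by rewrite addr0.
by rewrite -big_split; apply: eq_bigr => i _; rewrite mulrDl.
Qed.

Lemma tmul_addr x y y' w : tmul k x (tadd y y') w = tmul k x y w + tmul k x y' w.
Proof.
rewrite /tmul /tadd; case: ifP => _; last by rewrite addr0.
by rewrite -big_split; apply: eq_bigr => i _; rewrite mulrDr.
Qed.

Lemma tmul1l x w : tmul k (@tone R d) x w = if (size w <= k)%N then x w else 0.
Proof.
rewrite /tmul; case: ifP => // _.
rewrite big_ord_recl /= take0 drop0 /tone eqxx mul1r big1 ?addr0 // => i _.
case: eqP => [/(congr1 size)|]; last by rewrite mul0r.
by rewrite size_takel.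
Qed.

Lemma tmul1r x w : tmul k x (@tone R d) w = if (size w <= k)%N then x w else 0.
Proof.
rewrite /tmul; case: ifP => // _.
rewrite big_ord_recr /= take_size drop_size /tone eqxx mulr1 big1 ?add0r // => i _.
case: eqP => [/(congr1 size)|]; last by rewrite mulr0.
by rewrite size_drop /= => /eqP; rewrite subn_eq0 leqNgt ltn_ord.
Qed.

Lemma tmulA x y z : tmul k (tmul k x y) z = tmul k x (tmul k y z).
Proof.
apply: functional_extensionality => w; rewrite /tmul; case: ifP => // le_wk.
set n := size w.
pose F j i := x (take j w) * y (take (i - j) (drop j w)) * z (drop i w).
transitivity (\sum_(0 <= i < n.+1) \sum_(0 <= j < i.+1) F j i).
  rewrite big_mkord; apply: eq_bigr => i _.
  have le_in : (i <= n)%N by rewrite -ltnS.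
  rewrite size_takel // (leq_trans le_in le_wk) big_mkord mulr_suml.
  apply: eq_bigr => j _; have le_ji : (j <= i)%N by rewrite -ltnS.
  by rewrite /F take_takel // take_drop subnK.
rewrite exchange_big_nat_triangle big_mkord; apply: eq_bigr => j _.
have le_jn : (j <= n)%N by rewrite -ltnS.
rewrite size_drop (leq_trans (leq_subr _ _) le_wk) -{1}(add0n j) big_addn subSn //.
rewrite big_mkord mulr_sumr; apply: eq_bigr => m _.
by rewrite /F addnK drop_drop mulrA.
Qed.

Lemma tpowS y l : tpow k y l.+1 = tmul k y (tpow k y l).
Proof. by []. Qed.

Lemma tpowSr y l : tpow k y l.+1 = tmul k (tpow k y l) y.
Proof.
elim: l => [|l IH].
  by apply: functional_extensionality => w; rewrite tpowS tmul1l tmul1r.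
by rewrite tpowS {1}IH -tmulA -tpowS.
Qed.

Lemma tpowS_nil y l : y [::] = 0 -> tpow k y l.+1 [::] = 0.
Proof. by move=> y0; rewrite tpowS /tmul /= big_ord1 y0 mul0r. Qed.

Lemma tpow_eq0 y l w : y [::] = 0 -> (size w < l)%N -> tpow k y l w = 0.
Proof.
move=> y0; elim: l w => [|l IH] w lt_wl //.
rewrite tpowS /tmul; case: ifP => // _; apply: big1 => -[[|i] lt_i] _ /=.
  by rewrite take0 y0 mul0r.
rewrite IH ?mulr0 // size_drop ltn_subLR // addSn ltnS.
by rewrite -ltnS (leq_trans lt_wl) // ltnS leq_addl.
Qed.

Lemma tpow_nilpotent y : y [::] = 0 -> tpow k y k.+1 = @tzero R d.
Proof.
move=> y0; apply: functional_extensionality => w.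
have [le_wk | lt_kw] := leqP (size w) k; first by rewrite tpow_eq0.
by rewrite tpowS tmul_eq0.
Qed.

End TruncatedProduct.

Section Words.
Variables (R : realFieldType) (d k : nat).
Notation T := (tens R d).
Implicit Types (x y z : T) (w v : seq 'I_d).

Lemma eval_word_eq0 z u w :
  (size w != sumn u) || ((0 < size u)%N && (k < size w)%N) ->
  eval_word k u z w = 0.
Proof.
elim: u w => [|a u IH] w /=; first by rewrite orbF /tone; case: w.
case/orP=> [neq_w | lt_kw]; last by rewrite tmul_eq0.
rewrite /tmul; case: ifP => // le_wk; apply: big1 => i _.
rewrite /tlevel size_takel; last by rewrite -ltnS.
case: eqP => [eq_ia|]; last by rewrite mul0r.
rewrite IH ?mulr0 // size_drop eq_ia; apply/orP; left.
apply: contra neq_w => /eqP <-; rewrite subnKC //.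
by rewrite -eq_ia -ltnS.
Qed.

Lemma eval_word_high z u : (k < sumn u)%N -> eval_word k u z = @tzero R d.
Proof.
move=> lt_ku; apply: functional_extensionality => w; apply: eval_word_eq0.
by case: eqP => //= ->; rewrite lt_ku andbT; case: u lt_ku.
Qed.

Lemma tlevel_decomp y v : y [::] = 0 -> (size v <= k)%N ->
  y v = \sum_(i <- iota 1 k) tlevel i y v.
Proof.
move=> y0; case: v => [|a v] le_vk.
  by rewrite y0 big1_seq // => -[|i] /andP[_]; rewrite mem_iota.
have mem_v : size (a :: v) \in iota 1 k by rewrite mem_iota /= add1n ltnS.
rewrite (bigD1_seq _ mem_v (iota_uniq _ _)) /= big1 ?addr0 /tlevel ?eqxx //.
by move=> i; rewrite eq_sym => /negbTE ->.
Qed.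

Fixpoint words (l : nat) : seq (seq nat) :=
  if l is l'.+1 then [seq i :: u | i <- iota 1 k, u <- words l'] else [:: [::]].

Lemma mem_words l u : u \in words l -> size u = l /\ all (fun i => 0 < i <= k)%N u.
Proof.
elim: l u => [|l IH] u /=; first by rewrite inE => /eqP ->.
case/allpairsP=> [[i v] /= [mem_i /IH [<- all_v] ->]]; split => //=.
by rewrite all_v andbT; move: mem_i; rewrite mem_iota add1n ltnS.
Qed.

Lemma tpow_words y l : y [::] = 0 ->
  tpow k y l = fun w => \sum_(u <- words l) eval_word k u y w.
Proof.
move=> y0; elim: l => [|l IH]; apply: functional_extensionality => w.
  by rewrite big_seq1.
rewrite tpowS IH (tmul_ext (fun v => tlevel_decomp (v := v) y0) (fun v _ => erefl)).
rewrite tmul_suml big_allpairs_dep /=; apply: eq_bigr => i _.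
by rewrite tmul_sumr.
Qed.

Lemma sum_words_eq_var (a : R) m : (0 < k)%N ->
  \sum_(u <- words m | u == [:: k]) a = if m == 1%N then a else 0.
Proof.
move=> k_gt0; case: ifP => [/eqP -> | m_neq1].
  rewrite big_mkcond big_allpairs_dep.
  rewrite (eq_bigr (fun i => if i == k then a else 0)); last first.
    by move=> i _; rewrite big_seq1 eqseq_cons andbT.
  by rewrite -big_mkcond big_pred1_seq ?iota_uniq // mem_iota add1n ltnS k_gt0 leqnn.
rewrite big1_seq // => u /andP[/eqP -> /mem_words [/= size_u _]].
by move: m_neq1; rewrite -size_u.
Qed.

Lemma eval_word_levels u y z : all (leq 1) u ->
    (forall i, (0 < i)%N -> tlevel i y = tlevel i z) ->
  eval_word k u y = eval_word k u z.
Proof.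
move=> u_gt0 eq_yz; elim: u u_gt0 => [|a u IH] //= /andP[a_gt0 /IH ->].
by rewrite eq_yz.
Qed.

Lemma tlevel_sub_tone z i : (0 < i)%N -> tlevel i (tsub z (@tone R d)) = tlevel i z.
Proof.
move=> i_gt0; apply: functional_extensionality => w.
rewrite /tlevel /tsub /tadd /topp /tscale /tone.
case: eqP => // size_w; case: eqP => [w_nil|]; last by rewrite mulr0 addr0.
by move: i_gt0; rewrite -size_w w_nil.
Qed.

End Words.

Section SeriesRepresentation.
Variables (R : realFieldType) (d k : nat).
Notation T := (tens R d).
Implicit Types (x y z : T) (w v : seq 'I_d).

Definition tseries (c : nat -> R) (e : nat -> nat) n y : T :=
  tsum n (fun l => tscale (c l) (tpow k y (e l))).

Definition series_ncpoly (c : nat -> R) (e : nat -> nat) n : ncpoly R :=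
  flatten [seq [seq (c l, u) | u <- words k (e l)] | l <- iota 0 n].

Definition remove_var (F : ncpoly R) : ncpoly R := [seq t <- F | k \notin t.2].

Lemma series_ncpoly_over c e n : ncpoly_over k (series_ncpoly c e n).
Proof.
apply/allP=> t /flatten_mapP [l _ /mapP [u mem_u ->]] /=.
by have [_ ->] := mem_words mem_u.
Qed.

Lemma remove_var_over F : ncpoly_over k F -> ncpoly_over k.-1 (remove_var F).
Proof.
move=> /allP F_over; apply/allP=> t; rewrite mem_filter => /andP[k_notin /F_over].
move=> /allP t_over; apply/allP=> i mem_i; have /andP[i_gt0 le_ik] := t_over i mem_i.
rewrite i_gt0 -ltnS prednK ?(leq_trans i_gt0 le_ik) // ltn_neqAle le_ik andbT.
by apply: contraNneq k_notin => <-.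
Qed.

Lemma series_ncpolyE c e n y : y [::] = 0 ->
  ncpoly_eval k (series_ncpoly c e n) y = tseries c e n y.
Proof.
move=> y0; apply: functional_extensionality => w.
rewrite ncpoly_evalE /tseries tsumE big_flatten big_map; apply: eq_bigr => l _.
by rewrite big_map /tscale (tpow_words k (e l) y0) mulr_sumr.
Qed.

Lemma series_ncpoly_coef_var c e n : (0 < k)%N ->
  \sum_(t <- series_ncpoly c e n | t.2 == [:: k]) t.1 =
  \sum_(l <- iota 0 n | e l == 1%N) c l.
Proof.
move=> k_gt0; rewrite big_flatten big_map [RHS]big_mkcond.
by apply: eq_bigr => l _; rewrite big_map sum_words_eq_var.
Qed.

(* Every word containing s^(k) other than s^(k) itself has level > k. *)
Lemma ncpoly_eval_remove_var F y : ncpoly_over k F ->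
  ncpoly_eval k F y =
  ncpoly_eval k ((\sum_(t <- F | t.2 == [:: k]) t.1, [:: k]) :: remove_var F) y.
Proof.
move=> /allP F_over; apply: functional_extensionality => w.
rewrite [RHS]/= /tadd /tscale !ncpoly_evalE big_filter.
rewrite (bigID (fun t => k \in t.2)) /=; congr (_ + _).
rewrite mulr_suml big_mkcond [RHS]big_mkcond big_seq [RHS]big_seq.
apply: eq_bigr => t mem_t; have := F_over t mem_t.
case: (boolP (t.2 == [:: k])) => [/eqP -> | t_neq t_over]; first by rewrite inE eqxx.
case: ifP => // k_in; rewrite eval_word_high ?mulr0 // ltn_sumn_mem //.
by apply: sub_all t_over => i /andP[].
Qed.

Lemma ncpoly_eval_levels m F y z : ncpoly_over m F ->
    (forall i, (0 < i)%N -> tlevel i y = tlevel i z) ->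
  ncpoly_eval k F y = ncpoly_eval k F z.
Proof.
move=> /allP F_over eq_yz; apply: functional_extensionality => w.
rewrite !ncpoly_evalE big_seq [RHS]big_seq; apply: eq_bigr => t /F_over t_over.
by rewrite (eval_word_levels k _ eq_yz) //; apply: sub_all t_over => i /andP[].
Qed.

Lemma tseries_represented c e n y z : (0 < k)%N -> y [::] = 0 ->
    (forall i, (0 < i)%N -> tlevel i y = tlevel i z) ->
  tseries c e n y =
  ncpoly_eval k ((\sum_(l <- iota 0 n | e l == 1%N) c l, [:: k]) ::
                 remove_var (series_ncpoly c e n)) z.
Proof.
move=> k_gt0 y0 eq_yz; rewrite -series_ncpolyE //.
rewrite (ncpoly_eval_levels (series_ncpoly_over _ _ _) eq_yz).
by rewrite ncpoly_eval_remove_var ?series_ncpoly_over // series_ncpoly_coef_var.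
Qed.

(* z (1 - y + y^2 - ... + (-1)^k y^k) telescopes to 1 - (-1)^(k+1) y^(k+1) = 1. *)
Lemma neumann_inverse z : z [::] = 1 ->
  let S := tseries (fun l => (-1) ^+ l) id k.+1 (tsub z (@tone R d)) in
  tmul k z S = @tone R d /\ tmul k S z = @tone R d.
Proof.
move=> z1 S; set y := tsub z (@tone R d).
have y0 : y [::] = 0 by rewrite /y /tsub /tadd /topp /tscale z1 /tone eqxx; ring.
have z_eq : z = tadd (@tone R d) y.
  by apply: functional_extensionality => w; rewrite /y /tsub /topp /tscale /tadd; ring.
have S_eq : S = fun v => \sum_(l <- iota 0 k.+1) (-1) ^+ l * tpow k y l v.
  by apply: functional_extensionality => v; rewrite /S /tseries tsumE.
have telescope w :
    \sum_(l <- iota 0 k.+1) (-1) ^+ l * tpow k y l w +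
    \sum_(l <- iota 0 k.+1) (-1) ^+ l * tpow k y l.+1 w = @tone R d w.
  pose f l := (-1) ^+ l * tpow k y l w.
  rewrite -big_split (eq_bigr (fun l => - (f l.+1 - f l))); last first.
    by move=> l _ /=; rewrite /f -tpowS exprS; ring.
  have -> : iota 0 k.+1 = index_iota 0 k.+1 by rewrite /index_iota subn0.
  rewrite sumrN telescope_sumr // /f tpow_nilpotent //.
  by rewrite /tzero mulr0 sub0r opprK expr0 mul1r.
split; apply: functional_extensionality => w.
all: have [le_wk | lt_kw] := leqP (size w) k;
  last by rewrite tmul_eq0 // /tone; case: w lt_kw.
- rewrite {1}z_eq tmul_addl tmul1l le_wk S_eq tmul_sumr.
  by under [X in _ + X]eq_bigr do rewrite tmul_scaler -tpowS; apply: telescope.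
- rewrite z_eq tmul_addr tmul1r le_wk S_eq tmul_suml.
  by under [X in _ + X]eq_bigr do rewrite tmul_scalel -tpowSr; apply: telescope.
Qed.

End SeriesRepresentation.

Section GroupElements.
Variables (R : realFieldType) (d k : nat).
Notation T := (tens R d).
Implicit Types (x y z : T).

Lemma in_lie_coef0 x : in_lie k x -> x [::] = 0.
Proof.
move=> x_lie; apply: (x_lie (fun y : T => y [::] = 0)); split => //.
- by move=> y z; rewrite /tadd => -> ->; rewrite addr0.
- by move=> c y; rewrite /tscale => ->; rewrite mulr0.
- move=> y z y0 z0; rewrite /tbracket /tsub /tadd /topp /tscale /tmul /=.
  by rewrite !big_ord1 /= y0 z0 !mulr0 addr0.
Qed.

Lemma texp_coef0 x : x [::] = 0 -> texp k x [::] = 1.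
Proof.
move=> x0; rewrite /texp tsumE /= big_cons {1}/tscale /= /tone /= mulr1 invr1.
by rewrite big1_seq ?addr0 // => -[|l] /andP[_]; rewrite ?mem_iota // /tscale tpowS_nil // mulr0.
Qed.

Lemma in_group_coef0 z : in_group k z -> z [::] = 1.
Proof. by case=> x [/in_lie_coef0 x0 ->]; apply: texp_coef0. Qed.

Lemma tsub_tone_coef0 z : z [::] = 1 -> tsub z (@tone R d) [::] = 0.
Proof. by move=> z1; rewrite /tsub /tadd /topp /tscale z1 /tone eqxx; ring. Qed.

End GroupElements.

Theorem lemma3p3 (R : realFieldType) (d k : nat) (hk : (0 < k)%N) :
  (exists g : ncpoly R, ncpoly_over k.-1 g /\
     represents k (@in_lie R d k) (@texp R d k) (ncadd (ncvar R k) g)) /\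
  (exists g : ncpoly R, ncpoly_over k.-1 g /\
     represents k (@in_group R d k) (@tlog R d k) (ncadd (ncvar R k) g)) /\
  (exists g : ncpoly R, ncpoly_over k.-1 g /\
     forall z : tens R d, in_group k z ->
       tmul k z (ncpoly_eval k (ncadd (ncopp (ncvar R k)) g) z) = @tone R d /\
       tmul k (ncpoly_eval k (ncadd (ncopp (ncvar R k)) g) z) z = @tone R d).
Proof.
have one_in : (1 \in iota 0 k.+1)%N by rewrite mem_iota.
have zero_in : (0 \in iota 0 k)%N by rewrite mem_iota.
split; [|split].
- pose c l := (l`!%:R : R)^-1.
  exists (remove_var k (series_ncpoly k c id k.+1)).
  split => [|z /in_lie_coef0 z0]; first exact/remove_var_over/series_ncpoly_over.
  have := tseries_represented c id k.+1 hk z0 (fun i _ => erefl).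
  by rewrite big_pred1_seq ?iota_uniq // /c invr1 => <-.
- pose c l := (-1) ^+ l.+2 / l.+1%:R : R.
  exists (remove_var k (series_ncpoly k c succn k)).
  split => [|z /in_group_coef0 z1]; first exact/remove_var_over/series_ncpoly_over.
  have := tseries_represented c succn k hk (tsub_tone_coef0 z1) (tlevel_sub_tone z).
  rewrite (eq_bigl (eq_op^~ 0%N)) // big_pred1_seq ?iota_uniq //.
  by rewrite /c sqrrN expr1n divr1 => <-.
- pose c l := (-1) ^+ l : R.
  exists (remove_var k (series_ncpoly k c id k.+1)).
  split => [|z /in_group_coef0 z1]; first exact/remove_var_over/series_ncpoly_over.
  have := tseries_represented c id k.+1 hk (tsub_tone_coef0 z1) (tlevel_sub_tone z).
  rewrite big_pred1_seq ?iota_uniq // /c expr1 => <-.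
  exact: neumann_inverse.
Qed.
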